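(* Let $M\in\mathbb{R}^{n\times n}$ be a P$_s$-matrix all of whose entries are nonnegative, let $q\in\mathbb{R}^n$, and let $\theta:=\{i\in\{1,\dots,n\}:q_i<0\}$. If $|\theta|\le s$, then $\mathrm{sol}(M,q)\cap S$ is nonempty and contains exactly one element $x^*$ with $\mathrm{supp}(x^* )\subseteq\theta$.
   Context: A P$_s$-matrix is a square matrix all of whose principal minors of order up to $s$ are positive. $\mathrm{sol}(M,q)=\{x: x\ge0,\ Mx+q\ge0,\ \langle x,Mx+q\rangle=0\}$; $S=\{x\in\mathbb{R}^n:\|x\|_0\le s\}$ with $\|x\|_0$ the number of nonzero entries; $\mathrm{supp}(x)=\{i:x_i\ne0\}$. *)

From mathcomp Require Import all_boot all_order all_algebra.
From mathcomp Require Import reals.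
Set Implicit Arguments. Unset Strict Implicit. Unset Printing Implicit Defensive.
Import Order.TTheory GRing.Theory Num.Theory.
Local Open Scope ring_scope.

Definition principal_submx (R : ringType) (n : nat) (M : 'M[R]_n)
  (I : {set 'I_n}) : 'M[R]_#|I| :=
  \matrix_(i < #|I|, j < #|I|) M (enum_val i) (enum_val j).

Definition principal_minor (R : comRingType) (n : nat) (M : 'M[R]_n)
  (I : {set 'I_n}) : R := \det (principal_submx M I).

Definition Ps_matrix (R : realDomainType) (n s : nat) (M : 'M[R]_n) : Prop :=
  forall I : {set 'I_n}, (0 < #|I|)%N -> (#|I| <= s)%N ->
    0 < principal_minor M I.

Definition sol (R : realDomainType) (n : nat) (M : 'M[R]_n) (q : 'cV[R]_n)
  (x : 'cV[R]_n) : Prop :=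
  (forall i, 0 <= x i ord0) /\
  (forall i, 0 <= (M *m x + q) i ord0) /\
  \sum_i x i ord0 * (M *m x + q) i ord0 = 0.

Definition supp (R : ringType) (n : nat) (x : 'cV[R]_n) : {set 'I_n} :=
  [set i | x i ord0 != 0].

Definition norm0 (R : ringType) (n : nat) (x : 'cV[R]_n) : nat := #|supp x|.

Definition sparse (R : ringType) (n s : nat) (x : 'cV[R]_n) : Prop :=
  (norm0 x <= s)%N.

Definition theta (R : realDomainType) (n : nat) (q : 'cV[R]_n) : {set 'I_n} :=
  [set i | q i ord0 < 0].

From mathcomp Require Import all_boot all_order all_algebra.
From mathcomp Require Import reals.
From mathcomp Require Import perm ring lra.
Set Implicit Arguments. Unset Strict Implicit. Unset Printing Implicit Defensive.
Import Order.TTheory GRing.Theory Num.Theory.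
Local Open Scope ring_scope.

(* Since |theta| <= s, every principal minor of M indexed by a subset of theta is
   positive, so M reverses the sign of no nonzero vector supported on theta: if
   z_i (Mz)_i <= 0 on theta, then z = 0.  This makes the complementarity problem
   restricted to theta (x vanishing outside theta) uniquely solvable: uniqueness
   is immediate, and existence follows by induction on |theta| through a
   principal pivot on a diagonal entry M_tt > 0.  As M >= 0 and q_i >= 0 outside
   theta, the solution of the restricted problem solves the whole problem, and
   any solution supported in theta solves the restricted one. *)

Section Support.

Variable R : nzRingType.

Lemma supp_subsetP n (x : 'cV[R]_n) (T : {set 'I_n}) :
  reflect (forall i, i \notin T -> x i ord0 = 0) (supp x \subset T).
Proof.
apply: (iffP subsetP) => [suppT i iT | x0 i].
  by apply: contraNeq iT => xi; apply: suppT; rewrite inE.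
by rewrite inE; apply: contraR => /x0 ->; rewrite eqxx.
Qed.

Lemma supp_sub_subset n (x y : 'cV[R]_n) (T : {set 'I_n}) :
  supp x \subset T -> supp y \subset T -> supp (x - y) \subset T.
Proof.
move=> /supp_subsetP x0 /supp_subsetP y0; apply/supp_subsetP => i iT.
by rewrite !mxE x0 // y0 // subr0.
Qed.

Lemma mulmxBr_residual n (M : 'M[R]_n) (q x y : 'cV[R]_n) :
  M *m (x - y) = (M *m x + q) - (M *m y + q).
Proof. by rewrite opprD addrACA subrr addr0 mulmxBr. Qed.

End Support.

(* Padding with the identity keeps the matrix n x n, avoiding the dependent
   type 'M_#|I| of principal_submx. *)
Definition principal_mx (R : pzRingType) n (A : 'M[R]_n) (I : {set 'I_n}) : 'M[R]_n :=
  \matrix_(i, j) if (i \in I) && (j \in I) then A i j else (i == j)%:R.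

Section PrincipalMinors.

Variable R : comNzRingType.

Lemma det_mxsub_inj m n (e : m = n) (h : 'I_m -> 'I_n) (A : 'M[R]_n) :
  injective h -> \det (mxsub h h A) = \det A.
Proof.
subst m => h_inj.
have -> : mxsub h h A = col_perm (perm h_inj) (row_perm (perm h_inj) A).
  by apply/matrixP=> i j; rewrite !mxE !permE.
rewrite col_permE row_permE !det_mulmx !det_perm odd_permV.
by rewrite mulrC mulrA -signr_addb addbb expr0 mul1r.
Qed.

Lemma det_principal_mx n (A : 'M[R]_n) (I : {set 'I_n}) :
  \det (principal_mx A I) = principal_minor A I.
Proof.
have e : (#|I| + #|~: I| = n)%N by rewrite cardsC card_ord.
pose h (i : 'I_(#|I| + #|~: I|)) : 'I_n :=
  match split i with inl a => enum_val a | inr b => enum_val b end.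
have hl a : h (lshift _ a) = enum_val a.
  by rewrite /h -[lshift _ a]/(unsplit (inl a)) unsplitK.
have hr b : h (rshift _ b) = enum_val b.
  by rewrite /h -[rshift _ b]/(unsplit (inr b)) unsplitK.
have inI (a : 'I_#|I|) : enum_val a \in I := enum_valP a.
have notinI (b : 'I_#|~: I|) : enum_val b \notin I by have := enum_valP b; rewrite inE.
have neq_val (a : 'I_#|I|) (b : 'I_#|~: I|) : enum_val a != enum_val b.
  by apply: contraNneq (notinI b) => <-.
have h_inj : injective h.
  move=> i j; case: (split_ordP i) => a ->; case: (split_ordP j) => b ->;
    rewrite ?hl ?hr => E.
  - by rewrite (enum_val_inj E).
  - by have := neq_val a b; rewrite E eqxx.
  - by have := neq_val b a; rewrite E eqxx.
  - by rewrite (enum_val_inj E).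
rewrite -(det_mxsub_inj e (principal_mx A I) h_inj).
have -> : mxsub h h (principal_mx A I) = block_mx (principal_submx A I) 0 0 1%:M.
  apply/matrixP=> i j.
  case: (split_ordP i) => a ->; case: (split_ordP j) => b ->;
    rewrite mxE ?hl ?hr ?block_mxEul ?block_mxEur ?block_mxEdl ?block_mxEdr !mxE.
  - by rewrite !inI.
  - by rewrite inI (negPf (notinI b)) (negPf (neq_val a b)).
  - by rewrite (negPf (notinI a)) eq_sym (negPf (neq_val b a)).
  - by rewrite (negPf (notinI a)) (inj_eq enum_val_inj).
by rewrite det_ublock det1 mulr1.
Qed.

Lemma det_add_delta n (A : 'M[R]_n) k c :
  \det (A + c *: delta_mx k k) = \det A + c * cofactor A k k.
Proof.
have cofE j : cofactor (A + c *: delta_mx k k) k j = cofactor A k j.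
  rewrite /cofactor; congr (_ * \det _); apply/matrixP=> i l.
  by rewrite !mxE eq_sym (negPf (neq_lift k i)) mulr0 addr0.
rewrite !(expand_det_row _ k).
under eq_bigr do rewrite cofE !mxE eqxx /= mulrDl.
rewrite big_split /=; congr (_ + _).
rewrite (bigD1 k) //= big1 ?addr0 => [|j /negPf jk]; first by rewrite eqxx mulr1.
by rewrite jk mulr0 mul0r.
Qed.

Lemma det_principal_mx_add_delta n (A : 'M[R]_n) (I : {set 'I_n}) k c :
  k \in I ->
  \det (principal_mx (A + c *: delta_mx k k) I) =
    \det (principal_mx A I) + c * \det (principal_mx A (I :\ k)).
Proof.
move=> kI.
have -> : principal_mx (A + c *: delta_mx k k) I = principal_mx A I + c *: delta_mx k k.
  apply/matrixP=> i j; rewrite !mxE.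
  have [->|_] := eqVneq i k; last by rewrite mulr0 !addr0; case: ifP.
  have [->|_] := eqVneq j k; last by rewrite mulr0 !addr0; case: ifP.
  by rewrite kI.
rewrite det_add_delta; congr (_ + c * _).
have cofE : cofactor (principal_mx A I) k k = cofactor (principal_mx A (I :\ k)) k k.
  rewrite /cofactor; congr (_ * \det _); apply/matrixP=> i j; rewrite !mxE !inE.
  by rewrite !(eq_sym _ k) !(negPf (neq_lift k _)).
rewrite cofE (expand_det_row _ k) (bigD1 k) //= big1 ?addr0 => [|j /negPf jk].
  by rewrite !mxE !inE eqxx mul1r.
by rewrite !mxE !inE eqxx /= eq_sym jk mul0r.
Qed.

Lemma mul_principal_mx n (A : 'M[R]_n) (I : {set 'I_n}) (z : 'cV[R]_n) i :
  supp z \subset I ->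
  (principal_mx A I *m z) i ord0 = if i \in I then (A *m z) i ord0 else z i ord0.
Proof.
move=> /supp_subsetP z0; rewrite !mxE; case: ifP => iI.
  apply: eq_bigr => j _; rewrite !mxE iI /=.
  by case: ifP => // /negbT jI; rewrite z0 // !mulr0.
rewrite (bigD1 i) //= big1 => [|j /negPf ji]; first by rewrite !mxE iI eqxx mul1r addr0.
by rewrite !mxE iI /= eq_sym ji mul0r.
Qed.

End PrincipalMinors.

Definition Pmatrix_on (R : numDomainType) n (M : 'M[R]_n) (T : {set 'I_n}) : Prop :=
  forall I : {set 'I_n}, I \subset T -> 0 < \det (principal_mx M I).

Definition no_sign_reversal_on (R : numDomainType) n (M : 'M[R]_n)
    (T : {set 'I_n}) : Prop :=
  forall z : 'cV[R]_n, supp z \subset T ->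
    (forall i, i \in T -> z i ord0 * (M *m z) i ord0 <= 0) -> z = 0.

Section SignReversal.

Variables (R : realFieldType) (n : nat).
Implicit Types (M : 'M[R]_n) (T : {set 'I_n}).

Lemma Pmatrix_on_add_delta M T k c :
  0 <= c -> Pmatrix_on M T -> Pmatrix_on (M + c *: delta_mx k k) T.
Proof.
move=> c_ge0 PM I IT; case kI: (k \in I).
  rewrite det_principal_mx_add_delta //; apply: ltr_wpDr (PM _ IT).
  exact/mulr_ge0/ltW/PM/(subset_trans (subD1set I k) IT).
have -> : principal_mx (M + c *: delta_mx k k) I = principal_mx M I.
  apply/matrixP=> i j; rewrite !mxE; case: ifP => // /andP[iI _].
  by have [ik|_] := eqVneq i k; [rewrite ik kI in iI | rewrite mulr0 addr0].
exact: PM.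
Qed.

Lemma Pmatrix_on_add_diag M T (d : 'rV[R]_n) :
  (forall i, 0 <= d 0 i) -> Pmatrix_on M T -> Pmatrix_on (M + diag_mx d) T.
Proof.
move=> d_ge0 PM; rewrite diag_mx_sum_delta.
elim/big_rec: _ => [|i D _ PD]; first by rewrite addr0.
by rewrite addrCA addrC; apply: Pmatrix_on_add_delta.
Qed.

(* If z_i (Mz)_i <= 0 on supp z, then adding the nonnegative diagonal
   -(Mz)_i / z_i makes the principal submatrix on supp z annihilate z. *)
Lemma Pmatrix_on_no_sign_reversal M T : Pmatrix_on M T -> no_sign_reversal_on M T.
Proof.
move=> PM z zT z_rev.
pose d := \row_i (- (M *m z) i ord0 / z i ord0).
have d_ge0 i : 0 <= d 0 i.
  rewrite mxE; have [->|zi] := eqVneq (z i ord0) 0; first by rewrite invr0 mulr0.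
  have iT : i \in T by apply: (subsetP zT); rewrite inE.
  have -> : - (M *m z) i ord0 / z i ord0 =
            - (z i ord0 * (M *m z) i ord0) / z i ord0 ^+ 2 by field.
  by rewrite divr_ge0 ?sqr_ge0 // oppr_ge0 z_rev.
pose P := principal_mx (M + diag_mx d) (supp z).
have Pz : P *m z = 0.
  apply/matrixP=> i j; rewrite (ord1 j) mul_principal_mx // [RHS]mxE inE.
  case: eqP => // /eqP zi.
  by rewrite mulmxDl mul_diag_mx !mxE; field.
have P_unit : P \in unitmx.
  by rewrite unitmxE unitfE lt0r_neq0 // (Pmatrix_on_add_diag d_ge0 PM).
by rewrite -(mulKmx P_unit z) Pz mulmx0.
Qed.

Lemma no_sign_reversal_subset M T T' :
  T' \subset T -> no_sign_reversal_on M T -> no_sign_reversal_on M T'.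
Proof.
move=> T'T nsr z zT' z_rev; have /supp_subsetP z0 := zT'.
apply: nsr (subset_trans zT' T'T) _ => i _.
by case: (boolP (i \in T')) => [/z_rev // | /z0 ->]; rewrite mul0r.
Qed.

Lemma no_sign_reversal_diag_gt0 M T t :
  no_sign_reversal_on M T -> t \in T -> 0 < M t t.
Proof.
move=> nsr tT; rewrite ltNge; apply/negP => Mtt_le0.
have : delta_mx t ord0 = 0 :> 'cV[R]_n.
  apply: nsr => [|i iT]; last first.
    by rewrite -colE !mxE andbT; case: eqP => [->|_]; rewrite ?mul1r ?mul0r.
  by apply/supp_subsetP => i iT; rewrite mxE andbT; case: eqP iT => // ->; rewrite tT.
by move/matrixP/(_ t ord0); rewrite !mxE !eqxx => /eqP; rewrite oner_eq0.
Qed.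

End SignReversal.

(* Pivoting on the diagonal entry (t, t): pivot_mx M t is the Schur complement
   eliminating x_t, and pivot_lift chooses x_t so that the t-th residual vanishes. *)
Section Pivot.

Variables (R : fieldType) (n : nat) (M : 'M[R]_n) (q : 'cV[R]_n) (t : 'I_n).

Definition pivot_mx : 'M[R]_n := \matrix_(i, j) (M i j - M i t * M t j / M t t).

Definition pivot_vec : 'cV[R]_n := \col_i (q i ord0 - M i t * q t ord0 / M t t).

Definition pivot_coef (y : 'cV[R]_n) : R := - (M *m y + q) t ord0 / M t t.

Definition pivot_lift (y : 'cV[R]_n) : 'cV[R]_n := y + pivot_coef y *: delta_mx t ord0.

Hypothesis Mtt : M t t != 0.

Lemma mul_pivot_mx (y : 'cV[R]_n) i :
  (pivot_mx *m y) i ord0 = (M *m y) i ord0 - M i t * (M *m y) t ord0 / M t t.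
Proof.
rewrite !mxE mulr_sumr mulr_suml -sumrB; apply: eq_bigr => j _; rewrite !mxE.
by field.
Qed.

Lemma mul_pivot_mx_t (y : 'cV[R]_n) : (pivot_mx *m y) t ord0 = 0.
Proof. by rewrite mul_pivot_mx; field. Qed.

Lemma pivot_residual_t (y : 'cV[R]_n) : (pivot_mx *m y + pivot_vec) t ord0 = 0.
Proof. by rewrite mxE mul_pivot_mx !mxE; field. Qed.

Lemma pivot_lift_entry (y : 'cV[R]_n) i :
  pivot_lift y i ord0 = y i ord0 + (i == t)%:R * pivot_coef y.
Proof. by rewrite !mxE andbT mulrC. Qed.

Lemma pivot_lift_residual (y : 'cV[R]_n) :
  M *m pivot_lift y + q = pivot_mx *m y + pivot_vec.
Proof.
apply/matrixP=> i j; rewrite (ord1 j) mulmxDr -scalemxAr -colE /pivot_coef.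
rewrite [RHS]mxE mul_pivot_mx; set My := M *m y.
by rewrite !mxE; field.
Qed.

End Pivot.

Definition complementary_at (R : numDomainType) n (M : 'M[R]_n) (q x : 'cV[R]_n)
    (i : 'I_n) : Prop :=
  [/\ 0 <= x i ord0, 0 <= (M *m x + q) i ord0 & x i ord0 * (M *m x + q) i ord0 = 0].

Definition sol_on (R : numDomainType) n (M : 'M[R]_n) (q : 'cV[R]_n)
    (T : {set 'I_n}) (x : 'cV[R]_n) : Prop :=
  supp x \subset T /\ forall i, i \in T -> complementary_at M q x i.

Section RestrictedLCP.

Variables (R : realFieldType) (n : nat).
Implicit Types (M : 'M[R]_n) (q x y : 'cV[R]_n) (T : {set 'I_n}).

Lemma complementary_at_sub M q x y i :
  complementary_at M q x i -> complementary_at M q y i ->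
  (x - y) i ord0 * (M *m (x - y)) i ord0 <= 0.
Proof.
case=> x_ge0 wx_ge0 x_wx [y_ge0 wy_ge0 y_wy].
rewrite (mulmxBr_residual _ q).
move: x_ge0 wx_ge0 x_wx y_ge0 wy_ge0 y_wy; set wx := M *m x + q; set wy := M *m y + q.
rewrite !mxE; nra.
Qed.

Lemma sol_on_setD1 M q T t x :
  t \in T -> sol_on M q (T :\ t) x -> 0 <= (M *m x + q) t ord0 -> sol_on M q T x.
Proof.
move=> tT [xT' x_compl] wt_ge0; split; first exact: subset_trans xT' (subD1set T t).
have xt : x t ord0 = 0 by apply: (supp_subsetP _ _ xT'); rewrite !inE eqxx.
move=> i iT; have [->|it] := eqVneq i t; first by split; rewrite ?xt ?mul0r.
by apply: x_compl; rewrite !inE it.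
Qed.

Section PivotSolution.

Variables (M : 'M[R]_n) (q : 'cV[R]_n) (T : {set 'I_n}) (t : 'I_n).
Hypotheses (tT : t \in T) (Mtt : M t t != 0).

Lemma pivot_lift_complementary y i : i != t ->
  complementary_at (pivot_mx M t) (pivot_vec M q t) y i ->
  complementary_at M q (pivot_lift M q t y) i.
Proof.
move=> /negPf it.
by rewrite /complementary_at pivot_lift_residual // pivot_lift_entry it mul0r addr0.
Qed.

Lemma pivot_lift_entry_t y :
  supp y \subset T :\ t -> pivot_lift M q t y t ord0 = pivot_coef M q t y.
Proof.
move=> /supp_subsetP y0; rewrite pivot_lift_entry eqxx mul1r y0 ?add0r //.
by rewrite !inE eqxx.
Qed.

Lemma pivot_lift_residual_t y : (M *m pivot_lift M q t y + q) t ord0 = 0.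
Proof. by rewrite pivot_lift_residual // pivot_residual_t. Qed.

Lemma supp_pivot_lift y : supp y \subset T :\ t -> supp (pivot_lift M q t y) \subset T.
Proof.
move=> /supp_subsetP y0; apply/supp_subsetP => i iT.
have /negPf it : i != t by apply: contraNneq iT => ->.
by rewrite pivot_lift_entry it mul0r addr0 y0 // !inE negb_and iT orbT.
Qed.

Lemma sol_on_pivot_lift y :
  sol_on (pivot_mx M t) (pivot_vec M q t) (T :\ t) y -> 0 <= pivot_coef M q t y ->
  sol_on M q T (pivot_lift M q t y).
Proof.
move=> [yT' y_compl] c_ge0; split; first exact: supp_pivot_lift.
move=> i iT; have [->|it] := eqVneq i t.
  by split; rewrite ?pivot_lift_residual_t ?pivot_lift_entry_t ?mulr0.
by apply: pivot_lift_complementary (y_compl _ _); rewrite // !inE it.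
Qed.

(* A negative coefficient would make M reverse the sign of x - pivot_lift y:
   at t this vector is positive while its image is the negative t-th residual of x. *)
Lemma pivot_coef_ge0 x y :
  no_sign_reversal_on M T -> sol_on M q (T :\ t) x -> (M *m x + q) t ord0 < 0 ->
  sol_on (pivot_mx M t) (pivot_vec M q t) (T :\ t) y -> 0 <= pivot_coef M q t y.
Proof.
move=> nsr [xT' x_compl] wxt_lt0 [yT' y_compl]; rewrite leNgt; apply/negP => c_lt0.
have xt : x t ord0 = 0 by apply: (supp_subsetP _ _ xT'); rewrite !inE eqxx.
have yl_supp := supp_pivot_lift yT'.
have yl_compl i : i \in T :\ t -> complementary_at M q (pivot_lift M q t y) i.
  by move=> iT'; apply: pivot_lift_complementary (y_compl _ iT'); case/setD1P: iT'.
move: (pivot_lift_entry_t yT') (pivot_lift_residual_t y) yl_supp yl_compl.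
move: (pivot_lift M q t y) => yl ylt wylt yl_supp yl_compl.
have : x - yl = 0.
  apply: nsr => [|i iT].
    by apply: supp_sub_subset yl_supp; apply: subset_trans xT' (subD1set T t).
  have [->|it] := eqVneq i t; last first.
    have iT' : i \in T :\ t by rewrite !inE it.
    exact: complementary_at_sub (x_compl _ iT') (yl_compl _ iT').
  rewrite (mulmxBr_residual _ q).
  move: (M *m x + q) (M *m yl + q) wxt_lt0 wylt => wx wy wxt_lt0 wylt.
  rewrite !mxE xt ylt wylt; nra.
by move/matrixP/(_ t ord0); rewrite !mxE xt ylt; lra.
Qed.

End PivotSolution.

Lemma no_sign_reversal_pivot M T t :
  t \in T -> no_sign_reversal_on M T -> no_sign_reversal_on (pivot_mx M t) (T :\ t).
Proof.
move=> tT nsr z zT' z_rev.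
have Mtt : M t t != 0 by rewrite lt0r_neq0 // (no_sign_reversal_diag_gt0 nsr tT).
have pivot_vec0 : pivot_vec M 0 t = 0.
  by apply/matrixP=> i j; rewrite !mxE mulr0 mul0r subr0.
have M_lift : M *m pivot_lift M 0 t z = pivot_mx M t *m z.
  by rewrite -[LHS]addr0 pivot_lift_residual // pivot_vec0 addr0.
have lift_entry i : i != t -> pivot_lift M 0 t z i ord0 = z i ord0.
  by move/negPf=> it; rewrite pivot_lift_entry it mul0r addr0.
have lift0 : pivot_lift M 0 t z = 0.
  apply: nsr => [|i iT]; first exact: supp_pivot_lift.
  rewrite M_lift; have [->|it] := eqVneq i t; first by rewrite mul_pivot_mx_t // mulr0.
  by rewrite lift_entry //; apply: z_rev; rewrite !inE it.
apply/matrixP=> i j; rewrite (ord1 j) mxE; have [->|it] := eqVneq i t.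
  by apply: (supp_subsetP _ _ zT'); rewrite !inE eqxx.
by rewrite -lift_entry // lift0 mxE.
Qed.

Lemma sol_on_exists T M q : no_sign_reversal_on M T -> exists x, sol_on M q T x.
Proof.
elim: {T}_.+1 {-2}T (ltnSn #|T|) M q => // k IH T; rewrite ltnS => T_le M q nsr.
have [->|[t tT]] := set_0Vmem T.
  by exists 0; split=> [|i]; [apply/supp_subsetP => i _; rewrite mxE | rewrite inE].
have T'_lt : (#|T :\ t| < k)%N by rewrite (cardsD1 t T) tT in T_le.
have Mtt : M t t != 0 by rewrite lt0r_neq0 // (no_sign_reversal_diag_gt0 nsr tT).
have nsr' := no_sign_reversal_subset (subD1set T t) nsr.
have [x x_sol] := IH _ T'_lt M q nsr'.
have [wxt_ge0 | wxt_lt0] := lerP 0 ((M *m x + q) t ord0).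
  by exists x; apply: sol_on_setD1 tT x_sol wxt_ge0.
have [y y_sol] := IH _ T'_lt _ (pivot_vec M q t) (no_sign_reversal_pivot tT nsr).
exists (pivot_lift M q t y); apply: sol_on_pivot_lift => //.
exact: pivot_coef_ge0 nsr x_sol wxt_lt0 y_sol.
Qed.

Lemma sol_on_unique M q T x y :
  no_sign_reversal_on M T -> sol_on M q T x -> sol_on M q T y -> x = y.
Proof.
move=> nsr [xT x_compl] [yT y_compl]; apply/eqP; rewrite -subr_eq0; apply/eqP.
apply: nsr => [|i iT]; first exact: supp_sub_subset.
exact: complementary_at_sub (x_compl _ iT) (y_compl _ iT).
Qed.

Lemma sol_on_of_sol M q T x : sol M q x -> supp x \subset T -> sol_on M q T x.
Proof.
move=> [x_ge0 [w_ge0 xw0]] xT; split=> // i _; split=> //.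
by apply: (psumr_eq0P _ xw0) => // j _; apply: mulr_ge0.
Qed.

Lemma sol_of_sol_on_theta M q x :
  (forall i j, 0 <= M i j) -> sol_on M q (theta q) x -> sol M q x.
Proof.
move=> M_ge0 [/supp_subsetP x0 x_compl].
have x_ge0 j : 0 <= x j ord0.
  by case: (boolP (j \in theta q)) => [/x_compl[] | /x0 ->].
have compl_out i : i \notin theta q -> complementary_at M q x i.
  move=> iq; rewrite /complementary_at x0 // mul0r; split=> //.
  rewrite mxE; apply: addr_ge0; last by move: iq; rewrite inE -leNgt.
  by rewrite mxE; apply: sumr_ge0 => j _; apply: mulr_ge0.
have x_compl_all i : complementary_at M q x i.
  by case: (boolP (i \in theta q)) => [/x_compl | /compl_out].
split=> [//|]; split=> [i|]; first by case: (x_compl_all i).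
by apply: big1 => i _; case: (x_compl_all i).
Qed.

End RestrictedLCP.

Lemma Ps_matrix_Pmatrix_on (R : realFieldType) n s (M : 'M[R]_n) (T : {set 'I_n}) :
  Ps_matrix s M -> (#|T| <= s)%N -> Pmatrix_on M T.
Proof.
move=> PsM T_le I IT; have [->|[i iI]] := set_0Vmem I.
  have -> : principal_mx M set0 = 1%:M by apply/matrixP=> i j; rewrite !mxE inE.
  by rewrite det1 ltr01.
rewrite det_principal_mx; apply: PsM; first by apply/card_gt0P; exists i.
exact: leq_trans (subset_leq_card IT) T_le.
Qed.

Theorem theorem4p3 (R : realType) (n s : nat) (M : 'M[R]_n) (q : 'cV[R]_n) :
  Ps_matrix s M ->
  (forall i j, 0 <= M i j) ->
  (#|theta q| <= s)%N ->
  (exists x : 'cV[R]_n, sol M q x /\ sparse s x) /\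
  (exists x : 'cV[R]_n,
      (sol M q x /\ sparse s x /\ supp x \subset theta q) /\
      forall y : 'cV[R]_n,
        sol M q y /\ sparse s y /\ supp y \subset theta q -> y = x).
Proof.
move=> PsM M_ge0 theta_le.
have nsr := Pmatrix_on_no_sign_reversal (Ps_matrix_Pmatrix_on PsM theta_le).
have [x x_sol_on] := sol_on_exists q nsr.
have x_sol := sol_of_sol_on_theta M_ge0 x_sol_on.
have x_supp : supp x \subset theta q := x_sol_on.1.
have x_sparse : sparse s x := leq_trans (subset_leq_card x_supp) theta_le.
split; first by exists x.
exists x; split=> // y [y_sol [_ y_supp]].
exact: sol_on_unique nsr (sol_on_of_sol y_sol y_supp) x_sol_on.
Qed.
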